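(* Let $L$ be a finite lattice, let $b\in L$, and let $A\subseteq L$ be a nonempty subset such that $b\not\le a$ for every $a\in A$. If $\tilde A$ is a maximal $b$-meet antichain of $A$, then $\nabla_A^b\varphi=\nabla_{\tilde A}^b\varphi$ for every $\varphi\in R(L)$.
   Context: $L$ is a finite lattice with order $\le$, meet $\wedge$ and maximum $\hat1$; $R(L)$ is the space of real-valued functions on $L$. For $A'\subseteq L$, $\bigwedge A'$ is the meet of $A'$, with $\bigwedge\emptyset=\hat1$. For a finite $A\subseteq L$ and $b\in L$, $\nabla_A^b\varphi=\sum_{A'\subseteq A}(-1)^{|A'|}\varphi(\bigwedge A'\wedge b)$ (for nonempty $A=\{a_1,\dots,a_n\}$ this is $\nabla_{a_1,\ldots,a_n}\varphi(b)$ with $\nabla_a\varphi(x)=\varphi(x)-\varphi(x\wedge a)$ iterated). An $n$-element subset $\{a_1,\dots,a_n\}$ is a $b$-meet antichain if $\{a_1\wedge b,\dots,a_n\wedge b\}$ is an $n$-element antichain; a singleton $\{a\}$ is a $b$-meet antichain only when $b\not\le a$. A maximal $b$-meet antichain of $A$ is a subset $\tilde A\subseteq A$ such that (i) $\tilde A$ is a $b$-meet antichain and (ii) for every $a\in A$ there is $a'\in\tilde A$ with $a\wedge b\le a'\wedge b$. *)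

From HB Require Import structures.
From mathcomp Require Import all_boot all_order all_algebra.
From mathcomp Require Import reals.
Set Implicit Arguments. Unset Strict Implicit. Unset Printing Implicit Defensive.
Import Order.TTheory GRing.Theory Num.Theory.

Local Open Scope order_scope.

(* Meet of a subset; the meet of the empty set is the top element \top. *)
Definition bigmeet d (L : finTBLatticeType d) (A' : {set L}) : L :=
  \meet_(x in A') x.

Definition nabla d (L : finTBLatticeType d) (R : pzRingType)
  (A : {set L}) (b : L) (phi : L -> R) : R :=
  (\sum_(A' in powerset A) (-1) ^+ #|A'| * phi (bigmeet A' `&` b))%R.

Definition meet_antichain d (L : finTBLatticeType d) (b : L) (S : {set L}) :=
  [/\ #|[set a `&` b | a in S]| = #|S|,
      (forall x y, x \in S -> y \in S -> x `&` b <= y `&` b -> x = y)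
    & (#|S| = 1%N -> forall a, a \in S -> ~~ (b <= a))].

Definition max_meet_antichain d (L : finTBLatticeType d) (b : L)
  (A At : {set L}) :=
  [/\ At \subset A, meet_antichain b At
    & forall a, a \in A -> exists2 a', a' \in At & a `&` b <= a' `&` b].

From HB Require Import structures.
From mathcomp Require Import all_boot all_order all_algebra.
From mathcomp Require Import reals.
Set Implicit Arguments. Unset Strict Implicit. Unset Printing Implicit Defensive.
Import Order.TTheory GRing.Theory Num.Theory.
Local Open Scope order_scope.

(* If [a & b <= a' & b] with [a' <> a] both in [A], the subsets of [A]
   containing [a] cancel in pairs [S], [a' |: S] (with [a' \notin S]): both
   have the same meet with [b] and opposite signs, so [a] may be dropped from
   [A].  Dropping one by one the elements of [A] outside [At], each dominated
   by an element of [At], leaves [nabla At b]. *)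

Section Nabla.
Variables (d : Order.disp_t) (L : finTBLatticeType d) (R : pzRingType) (b : L).
Variable phi : L -> R.

Lemma bigmeetU1_meet_dominated (S : {set L}) (a a' : L) :
  a \in S -> a `&` b <= a' `&` b -> bigmeet (a' |: S) `&` b = bigmeet S `&` b.
Proof.
move=> aS le_ab; rewrite /bigmeet meets_setU big_set1 -meetA.
have le_Sb : \meet_(x in S) x `&` b <= a `&` b.
  by rewrite lexI leIr andbT leIxl // (meets_inf id aS).
by rewrite meet_r //; have := le_trans le_Sb le_ab; rewrite lexI => /andP[].
Qed.

Lemma nablaD1_dominated (A : {set L}) (a a' : L) :
  a \in A -> a' \in A -> a != a' -> a `&` b <= a' `&` b ->
  nabla A b phi = nabla (A :\ a) b phi.
Proof.
move=> aA a'A neq_aa' le_ab; rewrite /nabla.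
rewrite (bigID (fun S : {set L} => a \in S)) /=.
set F := fun S : {set L} => ((-1) ^+ #|S| * phi (bigmeet S `&` b))%R.
have -> : (\sum_(S in powerset (A :\ a)) F S =
           \sum_(S in powerset A | a \notin S) F S)%R.
  by apply: eq_bigl => S; rewrite !powersetE subsetD1.
suff -> : (\sum_(S in powerset A | a \in S) F S = 0)%R by rewrite add0r.
rewrite (bigID (fun S : {set L} => a' \in S)) /=.
rewrite (reindex_onto (fun S => a' |: S) (fun S => S :\ a')) => [|S /andP[_]];
  last exact: setD1K.
have eq_reindexed (S : {set L}) :
    ((a' |: S) \in powerset A) && (a \in a' |: S) && (a' \in a' |: S)
      && ((a' |: S) :\ a' == S)
    = (S \in powerset A) && (a \in S) && (a' \notin S).
  have -> : ((a' |: S) :\ a' == S) = (a' \notin S).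
    by apply/eqP/idP => [<-|]; [rewrite !inE eqxx | exact: setU1K].
  by rewrite !powersetE subUset sub1set a'A setU11 !inE (negbTE neq_aa') andbT.
rewrite (eq_bigl _ _ eq_reindexed) -big_split /=.
apply: big1 => S /andP[/andP[_ aS] a'S].
rewrite /F cardsU1 a'S exprS mulN1r mulNr (bigmeetU1_meet_dominated aS le_ab).
by rewrite addNr.
Qed.

Lemma nabla_dominated_subset (A At : {set L}) :
  At \subset A ->
  (forall a, a \in A -> exists2 a', a' \in At & a `&` b <= a' `&` b) ->
  nabla A b phi = nabla At b phi.
Proof.
move: {2}#|A :\: At| (erefl #|A :\: At|) => n.
elim: n A => [|n IH] A cardD sub dom.
  by congr nabla; apply/eqP; rewrite eqEsubset sub andbT -setD_eq0 -cards_eq0 cardD.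
have [a] : exists a, a \in A :\: At by apply/set0Pn; rewrite -card_gt0 cardD.
rewrite inE => /andP[aAt aA]; have [a' a'At le_ab] := dom a aA.
have neq_aa' : a != a' by apply: contraNneq aAt => ->.
rewrite (nablaD1_dominated aA (subsetP sub _ a'At) neq_aa' le_ab).
apply: IH => [|| x /setD1P[_ /dom]] //.
- apply/eqP; rewrite -eqSS -cardD (cardsD1 a (A :\: At)) !inE aAt aA.
  by rewrite setDDl setDDl setUC.
- by rewrite subsetD1 sub aAt.
Qed.
End Nabla.

Theorem lemma2p3 (R : realType) d (L : finTBLatticeType d) (b : L)
  (A At : {set L}) :
  A != set0 ->
  (forall a, a \in A -> ~~ (b <= a)) ->
  max_meet_antichain b A At ->
  forall phi : L -> R, nabla A b phi = nabla At b phi.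
Proof. by move=> _ _ [sub _ dom] phi; exact: nabla_dominated_subset. Qed.
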